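(* Let $(M,\tau)$ be a tracial von Neumann algebra, $p\geq2$, $\xi_1,\dots,\xi_p\in M$ self-adjoint with $\|\xi_i\|_\infty\leq1$, and $\alpha_1,\dots,\alpha_p\in\mathbb R$. Let $\delta\in(0,1)$ and $\varepsilon\in(0,\frac{\delta^2}{p-1})$. Assume $\|\xi_i\|_2\geq\delta$ for every $1\leq i\leq p$, and $|\langle\xi_i,\xi_j\rangle|\leq\varepsilon$ for every $1\leq i<j\leq p$. Then there exists $h\in M$ with $h=h^*$, $\|h\|_\infty\leq\frac{\sum_{j=1}^p|\alpha_j|}{\delta^2-(p-1)\varepsilon}$ and $\tau(h\xi_i)=\alpha_i$ for every $1\leq i\leq p$.
   Context: $\langle a,b\rangle=\tau(b^*a)$ and $\|a\|_2=\tau(a^*a)^{1/2}$. *)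

From HB Require Import structures.
From mathcomp Require Import all_boot all_order all_algebra.
Set Implicit Arguments. Unset Strict Implicit. Unset Printing Implicit Defensive.
Import Order.TTheory GRing.Theory Num.Theory.
Local Open Scope ring_scope.

(* A tracial (unital) C*-algebra with a faithful tracial state, over a
   numeric algebraically closed field C (e.g. algC or R[i]). *)
Record tracial_alg (C : numClosedFieldType) (M : algType C) := TracialAlg {
  star : M -> M;
  opnorm : M -> C;
  tau : M -> C;
  starK : forall x, star (star x) = x;
  starD : forall x y, star (x + y) = star x + star y;
  starZ : forall (a : C) x, star (a *: x) = a^* *: star x;
  starM : forall x y, star (x * y) = star y * star x;
  tauD : forall x y, tau (x + y) = tau x + tau y;
  tauZ : forall (a : C) x, tau (a *: x) = a * tau x;
  tau1 : tau 1 = 1;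
  tau_star : forall x, tau (star x) = (tau x)^*;
  tauC : forall x y, tau (x * y) = tau (y * x);
  tau_pos : forall x, 0 <= tau (star x * x);
  tau_faithful : forall x, tau (star x * x) = 0 -> x = 0;
  opnorm_ge0 : forall x, 0 <= opnorm x;
  opnorm_eq0 : forall x, opnorm x = 0 -> x = 0;
  opnormD : forall x y, opnorm (x + y) <= opnorm x + opnorm y;
  opnormZ : forall (a : C) x, opnorm (a *: x) = `|a| * opnorm x;
  opnormM : forall x y, opnorm (x * y) <= opnorm x * opnorm y;
  opnorm_Cstar : forall x, opnorm (star x * x) = opnorm x ^+ 2;
  opnorm_complete : forall u : nat -> M,
    (forall e : C, 0 < e -> exists N, forall m n, (N <= m)%N -> (N <= n)%N ->
        opnorm (u m - u n) < e) ->
    exists l, forall e : C, 0 < e -> exists N, forall n, (N <= n)%N ->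
        opnorm (u n - l) < e
}.

Definition ip (C : numClosedFieldType) (M : algType C) (A : tracial_alg M)
  (a b : M) : C := tau A (star A b * a).

Definition l2norm (C : numClosedFieldType) (M : algType C) (A : tracial_alg M)
  (a : M) : C := sqrtC (tau A (star A a * a)).

(* Let G be the Gram matrix G_ji = tau(xi_j xi_i). Its diagonal is at least
   delta^2 and its off-diagonal entries are at most eps in modulus, so G is
   strictly diagonally dominant: for every row vector c,
   (delta^2 - (p-1) eps) sum_i |c_i| <= sum_i |(c G)_i|.  Hence G is invertible,
   and since G is real (the xi_i are self-adjoint) so is c = alpha G^-1.  Then
   h = sum_j c_j xi_j is self-adjoint, tau(h xi_i) = (c G)_i = alpha_i, and
   ||h||_oo <= sum_j |c_j| <= sum_i |alpha_i| / (delta^2 - (p-1) eps). *)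

From mathcomp Require Import all_boot all_order all_algebra.
From mathcomp Require Import ring.

Set Implicit Arguments.
Unset Strict Implicit.
Unset Printing Implicit Defensive.
Import Order.TTheory GRing.Theory Num.Theory.
Local Open Scope ring_scope.

Section DiagonallyDominant.
Variables (R : numFieldType) (p : nat) (G : 'M[R]_p) (d e : R).
Hypotheses (d_ge0 : 0 <= d) (diag_ge : forall i, d <= G i i)
  (offdiag_le : forall i j, i != j -> `|G j i| <= e).

Lemma diag_dominant_sum_norm (c : 'rV_p) :
  (d - (p.-1)%:R * e) * (\sum_i `|c 0 i|) <= \sum_i `|(c *m G) 0 i|.
Proof.
set S := \sum_i `|c 0 i|.
have row_bound i : `|c 0 i| * d - e * (S - `|c 0 i|) <= `|(c *m G) 0 i|.
  rewrite mxE (bigD1 i) //=; apply: le_trans (lerB_normD _ _).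
  apply: lerB.
    rewrite normrM (@ger0_norm _ (G i i)); last exact: le_trans (diag_ge i).
    exact: ler_wpM2l.
  have -> : S - `|c 0 i| = \sum_(j | j != i) `|c 0 j|.
    by rewrite /S (bigD1 i) //= addrAC subrr add0r.
  apply: le_trans (ler_norm_sum _ _ _) _; rewrite mulr_sumr.
  apply: ler_sum => j ji; rewrite normrM mulrC.
  by apply: ler_wpM2r => //; apply: offdiag_le; rewrite eq_sym.
apply: le_trans (ler_sum _ (fun i _ => row_bound i)) => {row_bound}.
rewrite sumrB -mulr_suml -mulr_sumr sumrB sumr_const card_ord -/S.
have [p0|p_gt0] := posnP p.
  have S0 : S = 0 by apply: big1 => i; move: (ltn_ord i); rewrite {2}p0.
  by rewrite S0 !(mulr0, mul0r, mul0rn, subrr).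
suff -> : S * d - e * (S *+ p - S) = (d - (p.-1)%:R * e) * S by [].
by rewrite -[p in S *+ p]prednK // mulrSr -mulr_natr; ring.
Qed.

Hypothesis dominant : 0 < d - (p.-1)%:R * e.

Lemma diag_dominant_sum_norm_le (c : 'rV_p) :
  \sum_i `|c 0 i| <= (\sum_i `|(c *m G) 0 i|) / (d - (p.-1)%:R * e).
Proof. by rewrite ler_pdivlMr // mulrC diag_dominant_sum_norm. Qed.

Lemma diag_dominant_unitmx : G \in unitmx.
Proof.
rewrite unitmxE unitfE; apply/negP => /det0P [c /eqP c_neq0 cG0]; apply: c_neq0.
apply/rowP => j; rewrite mxE; apply: normr0_eq0.
have S0 : \sum_i `|c 0 i| = 0.
  apply/eqP; rewrite eq_le sumr_ge0 ?andbT //.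
  have := diag_dominant_sum_norm_le c; rewrite cG0.
  by under [X in _ <= X / _]eq_bigr do rewrite mxE normr0; rewrite big1_eq mul0r.
by apply: (psumr_eq0P _ S0).
Qed.

End DiagonallyDominant.

Lemma map_mulmx_invmx (F : fieldType) (f : {rmorphism F -> F}) m n
    (a : 'M_(m, n)) (G : 'M_n) :
  map_mx f a = a -> map_mx f G = G -> map_mx f (a *m invmx G) = a *m invmx G.
Proof. by move=> fa fG; rewrite map_mxM map_invmx fa fG. Qed.

Section Tracial.
Variables (C : numClosedFieldType) (M : algType C) (A : tracial_alg M).

Lemma tau0 : tau A 0 = 0.
Proof. by have := tauZ A 0 0; rewrite scale0r mul0r. Qed.

Lemma star0 : star A 0 = 0.
Proof. by have := starZ A 0 0; rewrite scale0r conjC0 scale0r. Qed.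

Lemma opnorm0 : opnorm A 0 = 0.
Proof. by have := opnormZ A 0 0; rewrite scale0r normr0 mul0r. Qed.

Section LinearCombination.
Variables (I : finType) (c : I -> C) (x : I -> M).

Lemma star_lincomb :
  star A (\sum_i c i *: x i) = \sum_i (c i)^* *: star A (x i).
Proof.
rewrite (big_morph _ (starD A) star0).
by apply: eq_bigr => i _; rewrite starZ.
Qed.

Lemma opnorm_lincomb :
  opnorm A (\sum_i c i *: x i) <= \sum_i `|c i| * opnorm A (x i).
Proof.
rewrite -(eq_bigr _ (fun i _ => opnormZ A (c i) (x i))).
elim/big_rec2: _ => [|i y r _ IHr]; first by rewrite opnorm0.
by apply: le_trans (opnormD A _ _) _; rewrite lerD2l.
Qed.

Lemma tau_lincombMl (y : M) :
  tau A ((\sum_i c i *: x i) * y) = \sum_i c i * tau A (x i * y).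
Proof.
rewrite mulr_suml (big_morph _ (tauD A) tau0).
by apply: eq_bigr => i _; rewrite -scalerAl tauZ.
Qed.

End LinearCombination.

Lemma ler_sqr_l2norm (d : C) (x : M) :
  0 <= d -> d <= l2norm A x -> d ^+ 2 <= tau A (star A x * x).
Proof.
move=> d_ge0 d_le; rewrite -[tau A _]sqrtCK.
by apply: lerXn2r; rewrite ?nnegrE //; apply: le_trans d_le.
Qed.

Lemma conj_tau_selfadjointM (x y : M) :
  star A x = x -> star A y = y -> (tau A (x * y))^* = tau A (x * y).
Proof. by move=> sx sy; rewrite -tau_star starM sx sy tauC. Qed.

Definition gram {p : nat} (xi : 'I_p -> M) : 'M[C]_p :=
  \matrix_(j, i) tau A (xi j * xi i).

Section Gram.
Variables (p : nat) (xi : 'I_p -> M).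
Hypothesis xi_selfadjoint : forall i, star A (xi i) = xi i.

Lemma gram_mul_row (c : 'rV_p) i :
  (c *m gram xi) 0 i = tau A ((\sum_j c 0 j *: xi j) * xi i).
Proof. by rewrite tau_lincombMl mxE; apply: eq_bigr => j _; rewrite mxE. Qed.

Lemma map_gram_conj : map_mx Num.conj (gram xi) = gram xi.
Proof. by apply/matrixP => j i; rewrite !mxE conj_tau_selfadjointM. Qed.

Lemma gram_diag_ge (d : C) :
  0 <= d -> (forall i, d <= l2norm A (xi i)) -> forall i, d ^+ 2 <= gram xi i i.
Proof. by move=> d_ge0 d_le i; rewrite mxE -{1}xi_selfadjoint ler_sqr_l2norm. Qed.

Lemma gram_offdiag_le (e : C) :
  (forall i j : 'I_p, (i < j)%N -> `|ip A (xi i) (xi j)| <= e) ->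
  forall i j, i != j -> `|gram xi j i| <= e.
Proof.
move=> ip_le i j; rewrite neq_ltn mxE => /orP[] lt_ij; have := ip_le _ _ lt_ij;
  by rewrite /ip xi_selfadjoint // tauC.
Qed.

End Gram.

End Tracial.

Theorem lemma5p3 (C : numClosedFieldType) (M : algType C) (A : tracial_alg M)
  (p : nat) (xi : 'I_p -> M) (alpha : 'I_p -> C) (delta eps : C) :
  (2 <= p)%N ->
  (forall i, star A (xi i) = xi i) ->
  (forall i, opnorm A (xi i) <= 1) ->
  (forall i, alpha i \is Num.real) ->
  0 < delta -> delta < 1 ->
  0 < eps -> eps < delta ^+ 2 / (p.-1)%:R ->
  (forall i, delta <= l2norm A (xi i)) ->
  (forall i j : 'I_p, (i < j)%N -> `|ip A (xi i) (xi j)| <= eps) ->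
  exists h : M, star A h = h /\
    opnorm A h <= (\sum_(j < p) `|alpha j|) / (delta ^+ 2 - (p.-1)%:R * eps) /\
    (forall i, tau A (h * xi i) = alpha i).
Proof.
move=> p_ge2 xi_sa xi_le1 alpha_real delta_gt0 _ _ eps_lt xi_l2 xi_ip.
have pred_p_gt0 : 0 < (p.-1)%:R :> C by rewrite ltr0n -ltnS prednK // ltnW.
have dominant : 0 < delta ^+ 2 - (p.-1)%:R * eps.
  by rewrite subr_gt0 mulrC -ltr_pdivlMr.
have diag_ge := gram_diag_ge xi_sa (ltW delta_gt0) xi_l2.
have offdiag_le := gram_offdiag_le xi_sa xi_ip.
have delta2_ge0 := exprn_ge0 2 (ltW delta_gt0).
have dom_bound := diag_dominant_sum_norm_le delta2_ge0 diag_ge offdiag_le dominant.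
pose a : 'rV_p := \row_i alpha i.
pose c := a *m invmx (gram A xi).
have cG : c *m gram A xi = a.
  exact/mulmxKV/(diag_dominant_unitmx delta2_ge0 diag_ge offdiag_le dominant).
have c_real j : (c 0 j)^* = c 0 j.
  have a_real : map_mx Num.conj a = a.
    by apply/rowP => i; rewrite !mxE conj_Creal ?alpha_real.
  have := map_mulmx_invmx a_real (map_gram_conj xi_sa).
  by move/rowP/(_ j); rewrite mxE.
exists (\sum_j c 0 j *: xi j); split; [|split].
- by rewrite star_lincomb; apply: eq_bigr => j _; rewrite c_real xi_sa.
- apply: le_trans (opnorm_lincomb A _ _) _.
  apply: le_trans (ler_sum _ (fun j _ => ler_piMr (normr_ge0 _) (xi_le1 j))) _.
  apply: le_trans (dom_bound c) _; rewrite cG.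
  by under eq_bigr do rewrite mxE.
- by move=> i; rewrite -gram_mul_row cG mxE.
Qed.
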